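(* Let $q \equiv 1 \pmod{14}$ be a prime power, let $\rho$ be a primitive element of $\mathbb F_q$, let $c \equiv 1 \pmod 4$ be a positive integer, and let $l = (3c+1)/4$. Suppose that $c = c^7_q(1,5)$ (respectively $c = c^7_q(1,3)$) and set $\Gamma = \operatorname{Cay}(G_{l,3,q},S(\pi))$ where $\pi = \Psi_1$ (respectively $\pi=\Psi_2$). Then $\Gamma$ is edge-regular with parameters $(8lq,\ 8l-2+q,\ 8l-2)$ and has a regular clique of order $8l$.
   Context: For an additive group $A$, $A^*=A\setminus\{0\}$. $G_{l,3,q} = \mathbb Z_l\oplus\mathbb Z_2^3\oplus\mathbb F_q$. $S_0=\{(g,0): g\in(\mathbb Z_l\oplus\mathbb Z_2^3)^*\}$; for a bijection $\pi:(\mathbb Z_2^3)^*\to\mathbb Z_7$ and $z\in(\mathbb Z_2^3)^*$, $S_{z,\pi}=\{(0,z,\rho^j): j\in\mathbb Z,\ j\equiv\pi(z)\pmod 7\}$; $S(\pi)=S_0\cup\bigcup_z S_{z,\pi}$; $\operatorname{Cay}(G_{l,3,q},S(\pi))$ has vertex set $G_{l,3,q}$ with $x\sim y$ iff $y-x\in S(\pi)$. Elements of $\mathbb Z_2^3$ are written $(x_2,x_1,x_0)$, $\hat x\in\{0,1\}$ is the integer representative of $x\in\mathbb Z_2$; $\phi(x_2,x_1,x_0)=\hat x_0+2\hat x_1+4\hat x_2\pmod 7$, $\operatorname{wt}(x_2,x_1,x_0)=\hat x_0+\hat x_1+\hat x_2$, $\sigma_+(x_2,x_1,x_0)=(x_1,x_0,x_2)$,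 $\sigma_-(x_2,x_1,x_0)=(x_0,x_2,x_1)$; $\Psi_1(\mathbf x)=\phi(\sigma_+(\mathbf x))$ for odd weight, $\phi(\sigma_-(\mathbf x))$ for even weight; $\Psi_2(\mathbf x)=\phi(\sigma_+(\mathbf x)+\mathbf x)$ for odd weight, $\phi((1,1,1)+\mathbf x)$ for even weight. Write $q=14r+1$; $C^7_q(i)=\{\rho^{7j+i}:0\le j\le 2r-1\}$, $c^7_q(a,b)=|(C^7_q(a)+1)\cap C^7_q(b)|$. A graph is edge-regular with parameters $(N,k,\lambda)$ if it is non-empty, has $N$ vertices, is $k$-regular, and every two adjacent vertices have exactly $\lambda$ common neighbours. A clique $\mathcal C$ is regular if every vertex outside $\mathcal C$ is adjacent to the same number $e>0$ of vertices of $\mathcal C$. *)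

From HB Require Import structures.
From mathcomp Require Import all_boot all_order all_algebra all_field.
From mathcomp Require Import boolp.
Set Implicit Arguments. Unset Strict Implicit. Unset Printing Implicit Defensive.
Import Order.TTheory GRing.Theory Num.Theory.
Local Open Scope ring_scope.

(* Z_2^3, an element (x2,x1,x0) is written ((x2,x1),x0) *)
Definition Z23 := (bool * bool * bool)%type.
Definition z0 : Z23 := (false, false, false).
Definition add3 (z w : Z23) : Z23 :=
  ((z.1.1 (+) w.1.1, z.1.2 (+) w.1.2), z.2 (+) w.2).

Definition phi (x : Z23) : nat :=
  let: ((x2, x1), x0) := x in ((x0 : nat) + 2 * (x1 : nat) + 4 * (x2 : nat)) %% 7.
Definition wt (x : Z23) : nat :=
  let: ((x2, x1), x0) := x in ((x0 : nat) + (x1 : nat) + (x2 : nat))%N.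
Definition sigp (x : Z23) : Z23 := let: ((x2, x1), x0) := x in ((x1, x0), x2).
Definition sigm (x : Z23) : Z23 := let: ((x2, x1), x0) := x in ((x0, x2), x1).

(* values in Z_7 represented by residues 0..6 *)
Definition Psi1 (x : Z23) : nat :=
  if odd (wt x) then phi (sigp x) else phi (sigm x).
Definition Psi2 (x : Z23) : nat :=
  if odd (wt x) then phi (add3 (sigp x) x) else phi (add3 (true, true, true) x).

Definition vtx (l : nat) (F : finFieldType) := ('I_l * Z23 * F)%type.

(* b - a in Z_l, as a residue in 0..l-1 *)
Definition subZl (l : nat) (a b : 'I_l) : nat := ((b : nat) + (l - a)) %% l.

Definition inS (F : finFieldType) (rho : F) (pi : Z23 -> nat)
    (dl : nat) (dz : Z23) (dF : F) : bool :=
  ((dF == 0) && ~~ ((dl == 0)%N && (dz == z0)))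
  || [&& (dl == 0)%N, dz != z0 &
        `[< exists j : int, (j %% 7)%Z = (pi dz)%:Z /\ dF = rho ^ j >]].

Definition cay_adj (l : nat) (F : finFieldType) (rho : F) (pi : Z23 -> nat)
    (x y : vtx l F) : bool :=
  inS rho pi (subZl x.1.1 y.1.1) (add3 x.1.2 y.1.2) (y.2 - x.2).

(* cyclotomic classes and numbers of order 7, q = 14 r + 1 *)
Definition cclass (F : finFieldType) (rho : F) (i : nat) : {set F} :=
  [set rho ^+ (7 * j + i) | j : 'I_(2 * ((#|F|.-1) %/ 14))].
Definition cycnum (F : finFieldType) (rho : F) (a b : nat) : nat :=
  #|[set x : F | (x - 1 \in cclass rho a) && (x \in cclass rho b)]|.

Definition edge_regular (T : finType) (adj : rel T) (N k lam : nat) : Prop :=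
  [/\ (exists x y, adj x y),
      #|T| = N,
      (forall x, #|[set y | adj x y]| = k) &
      (forall x y, adj x y -> #|[set z | adj x z && adj y z]| = lam)].

Definition is_clique (T : finType) (adj : rel T) (C : {set T}) : Prop :=
  forall x y, x \in C -> y \in C -> x != y -> adj x y.

Definition regular_clique (T : finType) (adj : rel T) (C : {set T}) : Prop :=
  is_clique adj C /\
  exists2 e : nat, (0 < e)%N &
    forall v, v \notin C -> #|[set w in C | adj v w]| = e.

(* Translations are automorphisms of a Cayley graph, so all counts can be made at the
   identity.  The connection set S(pi) is S_0 = (Z_l (+) Z_2^3)^* (+) 0, of size 8l - 1,
   together with, over each nonzero z, the cyclotomic class C(pi z) of F: q - 1 more
   elements, whence the degree 8l - 2 + q.  For s in S_0 the common neighbours of 0 and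
   s are the other 8l - 2 elements of S_0, because pi is injective.  For s = (0, w0, t)
   with t in C(pi w0) they are the (0, w, f) with w <> 0, w0, f in C(pi w) and f - t in
   C(pi (w0 + w)); dividing by t, there are c(pi (w0 + w) - pi w0, pi w - pi w0) of
   them for each of the 6 values of w.  The symmetries c(a, b) = c(b, a) (-1 is a
   seventh power as q = 1 mod 14) and c(a, b) = c(-a, b - a) make all these numbers
   equal to c(1,5) for Psi_1 and to c(1,3) for Psi_2, so this edge too has
   6c = 8l - 2 common neighbours.  The 8l vertices with F-coordinate 0 form a clique,
   and a vertex (g, f) with f <> 0 is adjacent to exactly one of them. *)

From mathcomp Require Import all_boot all_order all_algebra all_field.
From mathcomp Require Import boolp zify ring.
Set Implicit Arguments. Unset Strict Implicit. Unset Printing Implicit Defensive.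
Import Order.TTheory GRing.Theory Num.Theory.
Local Open Scope ring_scope.

Lemma card_in_bij (T1 T2 : finType) (A : {pred T1}) (B : {pred T2})
    (g : T1 -> T2) (h : T2 -> T1) :
  {in A, forall x, g x \in B} -> {in B, forall y, h y \in A} ->
  {in A, cancel g h} -> {in B, cancel h g} -> #|A| = #|B|.
Proof.
move=> gAB hBA gK hK; rewrite -(card_in_imset (can_in_inj gK)).
apply: eq_card => y; apply/imsetP/idP => [[x xA ->]|yB]; first exact: gAB.
by exists (h y); rewrite ?hK ?hBA.
Qed.

Lemma sub_ord0 k (a b : 'I_k.+1) : (a - b == ord0) = (a == b).
Proof. by rewrite -[ord0]/(0 : 'I_k.+1)%R subr_eq0. Qed.

Lemma pair_neq (T1 T2 : eqType) (a b : T1) (w v : T2) :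
  ((a, w) != (b, v)) = (a != b) || (w != v).
Proof. by rewrite xpair_eqE negb_and. Qed.

Lemma card_Z23 : #|{: Z23}| = 8%N.
Proof. by rewrite !card_prod card_bool. Qed.

Lemma add3C x y : add3 x y = add3 y x.
Proof. by case: x y => [[[] []] []] [[[] []] []]. Qed.

Lemma add3A x y z : add3 x (add3 y z) = add3 (add3 x y) z.
Proof. by case: x y z => [[[] []] []] [[[] []] []] [[[] []] []]. Qed.

Lemma add3K x y : add3 x (add3 x y) = y.
Proof. by case: x y => [[[] []] []] [[[] []] []]. Qed.

Lemma add3_eq0 x y : (add3 x y == z0) = (x == y).
Proof. by case: x y => [[[] []] []] [[[] []] []]. Qed.

Lemma add3_fixl x y : add3 x y = y -> x = z0.
Proof. by case: x y => [[[] []] []] [[[] []] []]. Qed.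

Lemma add3_fixr x y : add3 x y = x -> y = z0.
Proof. by case: x y => [[[] []] []] [[[] []] []]. Qed.

Lemma card_slice (A B : finType) (b0 : B) (S : {set A}) :
  #|[set u : A * B | (u.2 == b0) && (u.1 \in S)]| = #|S|.
Proof.
apply: (card_in_bij (g := fst) (h := fun a => (a, b0))) => [[a b]|a|[a b]|a] //=.
- by rewrite !inE => /andP[].
- by rewrite !inE eqxx.
- by rewrite inE => /andP[/eqP /= ->].
Qed.

Lemma card_pair_sum (T1 T2 : finType) (P : T1 -> T2 -> bool) :
  #|[set p : T1 * T2 | P p.1 p.2]| = \sum_(x : T1) #|[set y | P x y]|.
Proof.
rewrite -sum1_card (eq_bigl (fun p : T1 * T2 => true && P p.1 p.2)); last first.
  by move=> p; rewrite inE.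
rewrite -(pair_big_dep xpredT P (fun _ _ => 1%N)); apply: eq_bigr => x _.
by rewrite -sum1_card; apply: eq_bigl => y; rewrite inE.
Qed.

(* The orbit of [(a, b)] under [(a, b) |-> (b, a)] and [(a, b) |-> (-a, b - a)],
   reduced modulo 7, with [-a] written [6 * a]. *)
Definition cyc_orbit (a b : nat) : seq (nat * nat) :=
  [seq (p.1 %% 7, p.2 %% 7)%N | p <- [:: (a, b); (b, a); (6 * a, b + 6 * a);
     (b + 6 * a, 6 * a); (6 * b, a + 6 * b); (a + 6 * b, 6 * b)]].

Section Cyclotomy.

Variables (F : finFieldType) (rho : F).
Hypothesis card_F_mod14 : (#|F| %% 14 = 1)%N.
Hypothesis rho_prim : (#|F|.-1).-primitive_root rho.

Local Notation q1 := #|F|.-1.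
Local Notation r := (#|F|.-1 %/ 14)%N.

(* These two restatements fix the finType instance of [#|F|], so that [lia] sees a
   single atom. *)
Lemma card_F_gt1 : (1 < #|F|)%N.
Proof. exact: finNzRing_gt1. Qed.

Lemma card_setC0 : #|[set~ (0 : F)]| = #|F|.-1.
Proof. exact: cardsC1. Qed.

Lemma q1E : q1 = (14 * r)%N.
Proof.
have := card_F_gt1; have := divn_eq #|F| 14; rewrite card_F_mod14.
by case: #|F| => //= N; lia.
Qed.

Lemma r_gt0 : (0 < r)%N.
Proof. by have := prim_order_gt0 rho_prim; rewrite q1E; lia. Qed.

Lemma rho_neq0 : rho != 0.
Proof.
apply/eqP => rho0; have := prim_expr_order rho_prim.
by rewrite rho0 expr0n (gtn_eqF (prim_order_gt0 rho_prim)) => /eqP; rewrite eq_sym oner_eq0.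
Qed.

Lemma rhoX_neq0 k : rho ^+ k != 0.
Proof. by rewrite expf_neq0 // rho_neq0. Qed.

Lemma expr_rho_mod7 a b : rho ^+ a = rho ^+ b -> a = b %[mod 7].
Proof.
move/eqP; rewrite (eq_prim_root_expr rho_prim) q1E => /eqP e.
by rewrite -(modn_dvdm a (dvdn_mulr r (isT : 7 %| 14)%N)) e modn_dvdm ?dvdn_mulr.
Qed.

(* [0] is a junk value at [f = 0], the only element that is not a power of [rho]. *)
Definition dlog (f : F) : nat :=
  odflt 0%N (omap val [pick k : 'I_q1 | f == rho ^+ k]).

Lemma dlogK f : f != 0 -> rho ^+ dlog f = f.
Proof.
move=> f0; have f_q1 : f ^+ q1 = 1.
  apply: (mulfI f0); rewrite mulr1 -exprS (ltn_predK card_F_gt1).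
  exact: expf_card.
have [i ->] := prim_rootP rho_prim f_q1.
by rewrite /dlog; case: pickP => [k /eqP -> //|/(_ i)]; rewrite eqxx.
Qed.

Lemma dlog_lt f : (dlog f < q1)%N.
Proof.
by rewrite /dlog; case: pickP => [k _|_]; [exact: ltn_ord | exact: prim_order_gt0 rho_prim].
Qed.

Lemma dlogX k : dlog (rho ^+ k) = k %[mod 7].
Proof. by apply: expr_rho_mod7; rewrite dlogK // rhoX_neq0. Qed.

Definition in_cclass (i : nat) (f : F) : bool := (f != 0) && (dlog f == i %[mod 7]).

Lemma in_cclass_mod i j f : i = j %[mod 7] -> in_cclass i f = in_cclass j f.
Proof. by rewrite /in_cclass => ->. Qed.

Lemma in_cclassX i k : k = i %[mod 7] -> in_cclass i (rho ^+ k).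
Proof. by move=> ki; rewrite /in_cclass rhoX_neq0 dlogX ki eqxx. Qed.

Lemma in_cclass_neq0 i f : in_cclass i f -> f != 0.
Proof. by case/andP. Qed.

Lemma in_cclass0 i : in_cclass i 0 = false.
Proof. by rewrite /in_cclass eqxx. Qed.

Lemma in_cclass_uniq i j f : in_cclass i f -> in_cclass j f -> i = j %[mod 7].
Proof. by case/andP=> _ /eqP <- /andP[_ /eqP <-]. Qed.

Lemma in_cclassP i f :
  reflect (exists2 k, f = rho ^+ k & k = i %[mod 7]) (in_cclass i f).
Proof.
apply: (iffP idP) => [/andP[f0 /eqP fi]|[k -> /in_cclassX //]].
by exists (dlog f); rewrite ?dlogK.
Qed.

Lemma in_cclassM i j f g :
  in_cclass i f -> in_cclass j g -> in_cclass (i + j) (f * g).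
Proof.
move=> /in_cclassP[a -> ai] /in_cclassP[b -> bj].
by rewrite -exprD; apply: in_cclassX; rewrite -modnDm ai bj modnDm.
Qed.

Lemma in_cclassV i f : in_cclass i f -> in_cclass (6 * i) f^-1.
Proof.
move=> fi; have f0 := in_cclass_neq0 fi.
have fV : in_cclass (dlog f^-1) f^-1 by rewrite /in_cclass invr_eq0 f0 /=.
have one0 : in_cclass 0 1 by rewrite -(expr0 rho) in_cclassX.
have := in_cclass_uniq (in_cclassM fi fV); rewrite mulfV // => /(_ _ one0).
by rewrite /in_cclass invr_eq0 f0 /= => ?; apply/eqP; lia.
Qed.

(* [q - 1 = 14 r], so [-1 = rho ^+ (7 * r)] is a seventh power. *)
Lemma in_cclassN1 : in_cclass 0 (-1).
Proof.
have half_sq : (rho ^+ (7 * r)) ^+ 2 = 1.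
  by rewrite -exprM (_ : 7 * r * 2 = q1)%N ?prim_expr_order // q1E; lia.
have half_neq1 : rho ^+ (7 * r) != 1.
  have := r_gt0; rewrite -(expr0 rho) (eq_prim_root_expr rho_prim) q1E mod0n.
  by move=> ?; rewrite modn_small; lia.
move/eqP: half_sq; rewrite sqrf_eq1 (negbTE half_neq1) /= => /eqP <-.
by apply: in_cclassX; rewrite modnMr.
Qed.

Lemma in_cclassN i f : in_cclass i f -> in_cclass i (- f).
Proof. by move=> fi; rewrite -mulN1r -(add0n i) in_cclassM ?in_cclassN1. Qed.

Lemma in_cclassE i f : (i < 7)%N -> (f \in cclass rho i) = in_cclass i f.
Proof.
move=> i_lt7; apply/imsetP/idP => [[j _ ->]|/andP[f0 /eqP fi]].
  by apply: in_cclassX; rewrite mulnC modnMDl.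
have k_lt : (dlog f %/ 7 < 2 * r)%N.
  by have := dlog_lt f; rewrite q1E; lia.
exists (Ordinal k_lt) => //=.
by rewrite -{1}(dlogK f0); congr (_ ^+ _); lia.
Qed.

Lemma in_cclass_exprz i f : (i < 7)%N ->
  `[< exists j : int, (j %% 7)%Z = i%:Z /\ f = rho ^ j >] = in_cclass i f.
Proof.
move=> i_lt7; apply/asboolP/idP => [[[k|k] [ki ->]]|].
- by apply: in_cclassX; move: ki; rewrite modz_nat => -[->]; rewrite modn_small.
- rewrite -[rho ^ _]/((rho ^+ k.+1)^-1).
  rewrite (@in_cclass_mod _ (6 * k.+1)); first exact/in_cclassV/in_cclassX.
  lia.
move=> /andP[f0 /eqP fi]; exists (dlog f); split; last exact: esym (dlogK f0).
by rewrite modz_nat fi modn_small.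
Qed.

Definition cyc_set (a b : nat) : {set F} :=
  [set x | in_cclass a (x - 1) & in_cclass b x].
Definition cyc (a b : nat) : nat := #|cyc_set a b|.

Lemma cycnumE a b : (a < 7)%N -> (b < 7)%N -> cycnum rho a b = cyc a b.
Proof.
by move=> a_lt7 b_lt7; apply: eq_card => x; rewrite !inE !in_cclassE.
Qed.

Lemma cyc_set_mod a b a' b' :
  a = a' %[mod 7] -> b = b' %[mod 7] -> cyc_set a b = cyc_set a' b'.
Proof.
move=> aa' bb'; apply/setP => x.
by rewrite !inE (in_cclass_mod _ aa') (in_cclass_mod _ bb').
Qed.

Lemma cyc_mod a b a' b' : a = a' %[mod 7] -> b = b' %[mod 7] -> cyc a b = cyc a' b'.
Proof. by move=> aa' bb'; rewrite /cyc (cyc_set_mod aa' bb'). Qed.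

(* [x |-> 1 - x] swaps the roles of [x - 1] and [x] up to the sign, a seventh power. *)
Lemma cycC a b : cyc a b = cyc b a.
Proof.
have flip u v x : x \in cyc_set u v -> 1 - x \in cyc_set v u.
  rewrite !inE => /andP[xu xv].
  by rewrite addrAC subrr add0r in_cclassN // -opprB in_cclassN.
by apply: (card_in_bij (flip a b) (flip b a)) => x _; rewrite subKr.
Qed.

Lemma cycN a b : cyc a b = cyc (6 * a) (b + 6 * a).
Proof.
pose g (x : F) := x / (x - 1).
have gB x : x - 1 != 0 -> g x - 1 = (x - 1)^-1 by move=> x1; rewrite /g; field.
have gK x : x - 1 != 0 -> g (g x) = x.
  by move=> x1; rewrite {1}/g gB // invrK /g; field.
have gA u v x : x \in cyc_set u v -> g x \in cyc_set (6 * u) (v + 6 * u).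
  rewrite !inE => /andP[xu xv]; rewrite gB ?(in_cclass_neq0 xu) //.
  by rewrite in_cclassV // in_cclassM // in_cclassV.
have gBA : {in cyc_set (6 * a) (b + 6 * a), forall x, g x \in cyc_set a b}.
  move=> x /gA; rewrite (@cyc_set_mod _ _ a b) //; lia.
have gKin u v : {in cyc_set u v, cancel g g}.
  by move=> x; rewrite inE => /andP[x1 _]; rewrite gK ?(in_cclass_neq0 x1).
exact: card_in_bij (gA a b) gBA (gKin _ _) (gKin _ _).
Qed.

Lemma cyc_orbitE a b x y : (x %% 7, y %% 7)%N \in cyc_orbit a b -> cyc x y = cyc a b.
Proof.
rewrite !inE !xpair_eqE.
case/orP=> [|/orP[|/orP[|/orP[|/orP[|]]]]] /andP[/eqP xE /eqP yE]; rewrite (cyc_mod xE yE).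
- by [].
- exact: cycC.
- by rewrite -cycN.
- by rewrite cycC -cycN.
- by rewrite -cycN cycC.
- by rewrite cycC -cycN cycC.
Qed.

Section CayleyGraph.

Variables (n : nat) (pi : Z23 -> nat) (m : nat).
Hypothesis pi_lt7 : forall z, (pi z < 7)%N.
Hypothesis pi_inj : forall z w, z != z0 -> w != z0 -> pi z = pi w -> z = w.
Hypothesis pi_surj : forall i, (i < 7)%N -> exists2 w, w != z0 & pi w = i.
(* [x + 7 - y] is [x - y] modulo 7, avoiding truncated subtraction. *)
Hypothesis cyc_pi : forall z w, z != z0 -> w != z0 -> w != z ->
  cyc (pi (add3 z w) + 7 - pi z) (pi w + 7 - pi z) = m.

(* [l = n.+1], so that ['I_l] is a ring. *)
Local Notation V := (vtx n.+1 F).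
Local Notation adj := (@cay_adj n.+1 F rho pi).

Definition in_conn (d : V) : bool := inS rho pi d.1.1 d.1.2 d.2.

Lemma in_connE a w f : in_conn ((a, w), f) =
  ((f == 0) && ((a != ord0) || (w != z0)))
  || [&& a == ord0, w != z0 & in_cclass (pi w) f].
Proof. by rewrite /in_conn /inS /= in_cclass_exprz // negb_and. Qed.

Definition vadd (x d : V) : V := ((x.1.1 + d.1.1, add3 x.1.2 d.1.2), x.2 + d.2).
Definition vsub (y x : V) : V := ((y.1.1 - x.1.1, add3 x.1.2 y.1.2), y.2 - x.2).

Lemma adjE x y : adj x y = in_conn (vsub y x).
Proof. by rewrite /cay_adj /in_conn /subZl /= modnDmr. Qed.

Lemma vsubK x d : vsub (vadd x d) x = d.
Proof.
case: x d => [[a w] f] [[b u] g]; rewrite /vsub /vadd /= add3K.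
by rewrite (addrC a) addrK (addrC f) addrK.
Qed.

Lemma vaddK x y : vadd x (vsub y x) = y.
Proof. by case: x y => [[a w] f] [[b u] g]; rewrite /vsub /vadd /= add3K !subrKC. Qed.

Lemma vsub_vadd x y u : vsub (vadd x u) y = vsub u (vsub y x).
Proof.
case: x y u => [[a w] f] [[b v] g] [[c u] h]; rewrite /vsub /vadd /=.
by rewrite !opprB !addrA (addrC c) (addrC h) add3A (add3C v w).
Qed.

Definition common_conn (s : V) : {set V} := [set u | in_conn u && in_conn (vsub u s)].

Lemma card_nbhd x : #|[set y | adj x y]| = #|[set d | in_conn d]|.
Proof.
apply: (card_in_bij (g := vsub^~ x) (h := vadd x)) => [y|d|y _|d _];
  by rewrite ?inE ?adjE ?vsubK ?vaddK.
Qed.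

Lemma card_common_nbhd x y :
  #|[set z | adj x z && adj y z]| = #|common_conn (vsub y x)|.
Proof.
apply: (card_in_bij (g := vsub^~ x) (h := vadd x)) => [z|d|z _|d _].
- by rewrite !inE !adjE -vsub_vadd vaddK.
- by rewrite !inE !adjE vsubK vsub_vadd.
- exact: vaddK.
- exact: vsubK.
Qed.

Definition zclass (f : F) : Z23 :=
  odflt z0 [pick w | (w != z0) && (pi w == dlog f %% 7)%N].

Lemma zclassP f : zclass f != z0 /\ pi (zclass f) = (dlog f %% 7)%N.
Proof.
rewrite /zclass; case: pickP => [w /andP[wz /eqP //]|].
have [w wz wf] := pi_surj (ltn_pmod (dlog f) (isT : (0 < 7)%N)).
by move/(_ w); rewrite wz wf eqxx.
Qed.

Lemma zclass_cclass f : f != 0 -> in_cclass (pi (zclass f)) f.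
Proof. by move=> f0; rewrite /in_cclass f0 (proj2 (zclassP f)) modn_mod eqxx. Qed.

Lemma pi_cclass_inj w w' f : w != z0 -> w' != z0 ->
  in_cclass (pi w) f -> in_cclass (pi w') f -> w = w'.
Proof.
move=> wz w'z fw fw'; apply: pi_inj => //.
by have := in_cclass_uniq fw fw'; rewrite !modn_small.
Qed.

Lemma zclass_uniq w f : w != z0 -> in_cclass (pi w) f -> w = zclass f.
Proof.
move=> wz fw; have [zz _] := zclassP f.
exact: pi_cclass_inj wz zz fw (zclass_cclass (in_cclass_neq0 fw)).
Qed.

Lemma card_conn : #|[set d : V | in_conn d]| = (8 * n.+1 - 2 + #|F|)%N.
Proof.
rewrite -(cardsID [set d : V | d.2 == 0]).
have -> : [set d : V | in_conn d] :&: [set d | d.2 == 0] =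
          [set d | (d.2 == 0) && (d.1 \in [set~ (ord0, z0)])].
  apply/setP => [[[a w] f]]; rewrite !inE in_connE /= xpair_eqE negb_and.
  by have [->|f0] := eqVneq f 0; rewrite ?in_cclass0 ?andbF ?orbF ?andbT.
have -> : #|[set d : V | in_conn d] :\: [set d | d.2 == 0]| = #|[set~ (0 : F)]|.
  apply: (card_in_bij (g := snd) (h := fun f => ((ord0, zclass f), f))).
  - by move=> [[a w] f]; rewrite !inE /= => /andP[].
  - move=> f; rewrite !inE /= => f0; rewrite f0 in_connE (negbTE f0) /=.
    by rewrite (proj1 (zclassP f)) zclass_cclass.
  - move=> [[a w] f]; rewrite !inE /= in_connE => /andP[f0].
    by rewrite (negbTE f0) /= => /and3P[/eqP -> wz /(zclass_uniq wz) <-].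
  - by [].
rewrite card_slice card_setC0 cardsC1 card_prod card_ord card_Z23.
by rewrite -!subn1; have := card_F_gt1; lia.
Qed.

Lemma common_conn_F0E (s : V) : s.2 = 0 -> s.1 != (ord0, z0) ->
  common_conn s = [set u | (u.2 == 0) && (u.1 \in [set~ (ord0, z0)] :\ s.1)].
Proof.
case: s => [[a0 w0] t] /= -> s_neq0; apply/setP => [[[a w] f]].
rewrite !inE /vsub /= !in_connE subr0 sub_ord0 add3_eq0 (pair_neq a a0) (pair_neq a ord0).
have [->|f0] := eqVneq f 0.
  by rewrite !in_cclass0 !andbF !orbF /= (eq_sym w0) andbC.
rewrite /=; apply/negbTE/negP => /andP[/and3P[/eqP aE wz fw] /and3P[aa0 w0w fw']].
have := pi_cclass_inj wz _ fw fw'; rewrite add3_eq0 => /(_ w0w) /esym /add3_fixl w0E.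
by move: s_neq0; rewrite -(eqP aa0) aE w0E eqxx.
Qed.

Lemma card_common_conn_F0 (s : V) :
  in_conn s -> s.2 = 0 -> #|common_conn s| = (8 * n.+1 - 2)%N.
Proof.
case: s => [[a0 w0] t] /= + t0; rewrite t0 in_connE eqxx in_cclass0 !andbF orbF /=.
rewrite -pair_neq => s_neq0; rewrite common_conn_F0E //= card_slice.
have := cardsD1 (a0, w0) [set~ (ord0, z0)].
by rewrite cardsC1 card_prod card_ord card_Z23 in_setC1 s_neq0; lia.
Qed.

(* [f |-> f / t] maps this set onto [cyc_set (pi (w0 + w) - pi w0) (pi w - pi w0)]. *)
Lemma card_shifted_cclass w0 t w : w0 != z0 -> in_cclass (pi w0) t ->
    w != z0 -> w != w0 ->
  #|[set f | in_cclass (pi w) f & in_cclass (pi (add3 w0 w)) (f - t)]| = m.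
Proof.
move=> w0z ct wz ww0; have t0 := in_cclass_neq0 ct; have := pi_lt7 w0.
rewrite -(cyc_pi w0z wz ww0) /cyc => w0_lt7.
rewrite (@cyc_set_mod _ _ (pi (add3 w0 w) + 6 * pi w0) (pi w + 6 * pi w0)); try lia.
apply: (card_in_bij (g := fun f => f / t) (h := fun x => t * x)) => [f|x|f _|x _].
- rewrite !inE => /andP[fw fwt]; have -> : f / t - 1 = (f - t) / t by rewrite mulrBl divff.
  by rewrite in_cclassM ?in_cclassV // in_cclassM ?in_cclassV.
- rewrite !inE => /andP[x1 x2]; have -> : t * x - t = t * (x - 1) by rewrite mulrBr mulr1.
  rewrite (@in_cclass_mod (pi w) (pi w0 + (pi w + 6 * pi w0))) ?in_cclassM //; last lia.
  by rewrite (@in_cclass_mod _ (pi w0 + (pi (add3 w0 w) + 6 * pi w0))) ?in_cclassM //; lia.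
- by rewrite mulrC divfK.
- by rewrite mulrC mulKf.
Qed.

Lemma common_conn_cycP w0 t (u : V) : w0 != z0 -> in_cclass (pi w0) t ->
  (u \in common_conn ((ord0, w0), t)) = [&& u.1.1 == ord0, u.1.2 != z0, u.1.2 != w0,
     in_cclass (pi u.1.2) u.2 & in_cclass (pi (add3 w0 u.1.2)) (u.2 - t)].
Proof.
case: u => [[a w] f] w0z ct /=; have t0 := in_cclass_neq0 ct.
rewrite inE /vsub /= !in_connE subr0.
apply/idP/idP => [/andP[]|/and5P[/eqP-> wz ww0 fw fwt]]; last first.
  by rewrite wz fw add3_eq0 (eq_sym w0) ww0 fwt !orbT.
have [->|f0] := eqVneq f 0.
  rewrite in_cclass0 !andbF orbF /= add0r oppr_eq0 (negbTE t0) /= => aw.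
  case/and3P=> /eqP aE w0wz /(pi_cclass_inj w0wz w0z)/(_ (in_cclassN ct)).
  by move/add3_fixr => wE; move: aw; rewrite aE wE eqxx.
rewrite /= => /and3P[/eqP-> wz fw].
have [ft|ft] := eqVneq f t.
  move: fw; rewrite ft => /(pi_cclass_inj wz w0z)/(_ ct) ->.
  by rewrite add3_eq0 !eqxx /= andbF.
rewrite subr_eq0 (negbTE ft) add3_eq0 (eq_sym w0) andFb orFb.
by case/and3P=> _ -> ->; rewrite wz fw.
Qed.

Lemma card_common_conn_cyc (s : V) :
  in_conn s -> s.2 != 0 -> #|common_conn s| = (6 * m)%N.
Proof.
case: s => [[a0 w0] t] /=; rewrite in_connE => + t0; rewrite (negbTE t0) /=.
case/and3P=> /eqP -> w0z ct.
pose P w f :=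
  [&& w != z0, w != w0, in_cclass (pi w) f & in_cclass (pi (add3 w0 w)) (f - t)].
have -> : #|common_conn ((ord0, w0), t)| = #|[set p : Z23 * F | P p.1 p.2]|.
  apply: (card_in_bij (g := fun u : V => (u.1.2, u.2)) (h := fun p => ((ord0, p.1), p.2))).
  - by move=> u; rewrite common_conn_cycP // inE => /andP[].
  - by move=> [w f]; rewrite common_conn_cycP // inE eqxx.
  - by move=> [[a w] f]; rewrite common_conn_cycP // => /andP[/eqP /= ->].
  - by case.
rewrite card_pair_sum (eq_bigr (fun w => if w \in [set~ z0] :\ w0 then m else 0%N)).
  rewrite -big_mkcond sum_nat_const /=.
  by have := cardsD1 w0 [set~ z0]; rewrite cardsC1 card_Z23 in_setC1 w0z add1n => -[<-].
move=> w _; rewrite !inE; case: ifP => [/andP[ww0 wz]|wC].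
  rewrite -(card_shifted_cclass w0z ct wz ww0).
  by apply: eq_card => f; rewrite !inE /P wz ww0.
apply: eq_card0 => f; rewrite !inE; apply/negbTE/negP => /and4P[wz ww0 _ _].
by move: wC; rewrite ww0 wz.
Qed.

Lemma cay_edge_regular : (6 * m = 8 * n.+1 - 2)%N ->
  edge_regular adj (8 * n.+1 * #|F|) (8 * n.+1 - 2 + #|F|) (8 * n.+1 - 2).
Proof.
move=> m6; split.
- exists ((ord0, z0), 0), ((ord0, (true, true, true)), 0).
  by rewrite adjE in_connE /= subrr eqxx orbT.
- by rewrite !card_prod card_ord card_bool (mulnC n.+1).
- by move=> x; rewrite card_nbhd card_conn.
- move=> x y; rewrite adjE card_common_nbhd => xy.
  have [s0|s0] := eqVneq (vsub y x).2 0; first exact: card_common_conn_F0.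
  by rewrite card_common_conn_cyc.
Qed.

(* The neighbour of [(g, f)], [f != 0], in the clique is [(g + (0, z), 0)] with [-f] in
   the class of [pi z]. *)
Lemma cay_regular_clique :
  exists C : {set V}, #|C| = (8 * n.+1)%N /\ regular_clique adj C.
Proof.
exists [set v : V | v.2 == 0]; split.
  have := card_slice (0 : F) [set: 'I_n.+1 * Z23].
  rewrite cardsT card_prod card_ord card_Z23 (mulnC n.+1) => <-.
  by apply: eq_card => v; rewrite !inE andbT.
split.
  move=> [[a w] f] [[b v] g]; rewrite !inE /= => /eqP-> /eqP->.
  rewrite adjE in_connE /= subrr eqxx sub_ord0 add3_eq0 xpair_eqE eqxx andbT (pair_neq a b).
  case/orP=> [ab|wv].
    by rewrite eq_sym ab.
  by rewrite eq_sym wv orbT.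
exists 1%N => // -[[a w] f]; rewrite inE /= => f0.
rewrite -(cards1 ((a, add3 w (zclass (- f))), 0 : F)).
apply: eq_card => -[[b u] g]; rewrite !inE adjE in_connE /=.
have [->|g0] := eqVneq g 0; last first.
  by apply/esym/eqP => -[_ _ g0']; rewrite g0' eqxx in g0.
rewrite add0r oppr_eq0 (negbTE f0) /= sub_ord0.
apply/and3P/eqP => [[/eqP-> uz fu]|[-> ->]].
  by rewrite -(zclass_uniq uz fu) add3K.
by rewrite eqxx add3K (proj1 (zclassP _)) zclass_cclass ?oppr_eq0.
Qed.

Lemma cay_edge_regular_clique : (6 * m = 8 * n.+1 - 2)%N ->
  edge_regular adj (8 * n.+1 * #|F|) (8 * n.+1 - 2 + #|F|) (8 * n.+1 - 2)
  /\ exists C : {set V}, #|C| = (8 * n.+1)%N /\ regular_clique adj C.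
Proof. by move=> m6; split; [exact: cay_edge_regular | exact: cay_regular_clique]. Qed.

End CayleyGraph.

End Cyclotomy.

Lemma Psi1_lt7 z : (Psi1 z < 7)%N.
Proof. by case: z => [[[] []] []]. Qed.

Lemma Psi2_lt7 z : (Psi2 z < 7)%N.
Proof. by case: z => [[[] []] []]. Qed.

Lemma Psi1_inj z w : z != z0 -> w != z0 -> Psi1 z = Psi1 w -> z = w.
Proof. by case: z w => [[[] []] []] [[[] []] []]. Qed.

Lemma Psi2_inj z w : z != z0 -> w != z0 -> Psi2 z = Psi2 w -> z = w.
Proof. by case: z w => [[[] []] []] [[[] []] []]. Qed.

Lemma Psi1_surj i : (i < 7)%N -> exists2 w, w != z0 & Psi1 w = i.
Proof.
case: i => [|[|[|[|[|[|[|i]]]]]]] // _.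
- by exists (true, true, true).
- by exists (true, false, false).
- by exists (false, false, true).
- by exists (true, true, false).
- by exists (false, true, false).
- by exists (false, true, true).
- by exists (true, false, true).
Qed.

Lemma Psi2_surj i : (i < 7)%N -> exists2 w, w != z0 & Psi2 w = i.
Proof.
case: i => [|[|[|[|[|[|[|i]]]]]]] // _.
- by exists (true, true, true).
- by exists (true, true, false).
- by exists (true, false, true).
- by exists (false, false, true).
- by exists (false, true, true).
- by exists (true, false, false).
- by exists (false, true, false).
Qed.

Lemma Psi1_orbit z w : z != z0 -> w != z0 -> w != z ->
  ((Psi1 (add3 z w) + 7 - Psi1 z) %% 7, (Psi1 w + 7 - Psi1 z) %% 7)%N \in cyc_orbit 1 5.
Proof. by case: z w => [[[] []] []] [[[] []] []]. Qed.

Lemma Psi2_orbit z w : z != z0 -> w != z0 -> w != z ->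
  ((Psi2 (add3 z w) + 7 - Psi2 z) %% 7, (Psi2 w + 7 - Psi2 z) %% 7)%N \in cyc_orbit 1 3.
Proof. by case: z w => [[[] []] []] [[[] []] []]. Qed.

Theorem theorem3p3 (F : finFieldType) (rho : F) (c : nat) :
  (#|F| %% 14 = 1)%N ->
  (#|F|.-1).-primitive_root rho ->
  (0 < c)%N -> (c %% 4 = 1)%N ->
  let l := ((3 * c + 1) %/ 4)%N in
  (c = cycnum rho 1 5 ->
     edge_regular (@cay_adj l F rho Psi1) (8 * l * #|F|) (8 * l - 2 + #|F|) (8 * l - 2)
     /\ exists C : {set vtx l F}, #|C| = (8 * l)%N /\ regular_clique (@cay_adj l F rho Psi1) C)
  /\
  (c = cycnum rho 1 3 ->
     edge_regular (@cay_adj l F rho Psi2) (8 * l * #|F|) (8 * l - 2 + #|F|) (8 * l - 2)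
     /\ exists C : {set vtx l F}, #|C| = (8 * l)%N /\ regular_clique (@cay_adj l F rho Psi2) C).
Proof.
move=> card_F_mod14 rho_prim c_gt0 c_mod4 l.
have l6 : (6 * c = 8 * l - 2)%N by rewrite /l; lia.
have : (0 < l)%N by rewrite /l; lia.
clearbody l; case: l l6 => [//|n] l6 _.
split=> cE; rewrite cE (cycnumE card_F_mod14 rho_prim) // in l6.
  apply: (cay_edge_regular_clique card_F_mod14 rho_prim Psi1_lt7 Psi1_inj Psi1_surj _ l6).
  by move=> z w zz wz wzz; apply/cyc_orbitE/Psi1_orbit.
apply: (cay_edge_regular_clique card_F_mod14 rho_prim Psi2_lt7 Psi2_inj Psi2_surj _ l6).
by move=> z w zz wz wzz; apply/cyc_orbitE/Psi2_orbit.
Qed.
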